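(* Let $\gamma\in(0,1)$. There is a constant $c_1>0$, a polynomial in $\|D_x\|_\infty,\|D_u\|_\infty,\kappa,\kappa_B,\gamma^{-1},\bar w$ (independent of $n,m,H,t$), such that with $\epsilon_1(H)=c_1n\sqrt mH(1-\gamma)^H$ the following holds. Suppose the disturbance-action policy is implemented with time-varying parameters $\bm M_k\in\mathcal M$ for all $k$, and $H\ge\frac{\log(2\kappa^2)}{\log((1-\gamma)^{-1})}$. Then for every $t$, $$\max_{\|w_k\|_\infty\le\bar w}\|D_xA_{\mathbb K}^Hx_{t-H}\|_\infty\le\epsilon_1(H),\qquad\max_{\|w_k\|_\infty\le\bar w}\|D_u\mathbb KA_{\mathbb K}^Hx_{t-H}\|_\infty\le\epsilon_1(H),$$ where the maxima are over all disturbance sequences with $\|w_k\|_\infty\le\bar w$ for all $k$.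
   Context: System $x_{t+1}=Ax_t+Bu_t+w_t$, $A\in\mathbb R^{n\times n}$, $B\in\mathbb R^{n\times m}$, $x_0=0$, and $x_s=0$ for $s<0$. $D_x\in\mathbb R^{k_x\times n}$, $D_u\in\mathbb R^{k_u\times m}$; for matrices $\|\cdot\|_\infty$ is the max absolute row sum and $\|\cdot\|_2$ the spectral norm. $\bar w>0$. For $\kappa\ge1$, $\gamma\in(0,1]$, $K$ is $(\kappa,\gamma)$-strongly stable if $A-BK=Q^{-1}LQ$ with $\|L\|_2\le1-\gamma$ and $\max(\|Q\|_2,\|Q^{-1}\|_2,\|K\|_2)\le\kappa$. $\kappa_B=\max(\|B\|_2,1)$. Fix a $(\kappa,\gamma)$-strongly stable $\mathbb K$ and set $A_{\mathbb K}=A-B\mathbb K$. A parameter is a list $\bm M=(M^{[1]},\dots,M^{[H]})$, $M^{[i]}\in\mathbb R^{m\times n}$; implementing parameters $\bm M_t$ means $u_t=-\mathbb Kx_t+\sum_{i=1}^HM_t^{[i]}w_{t-i}$, with $w_s=0$ for $s<0$. $\mathcal M=\{\bm M:\|M^{[i]}\|_\infty\le2\sqrt n\kappa^3(1-\gamma)^{i-1},\ 1\le i\le H\}$. *)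

From HB Require Import structures.
From mathcomp Require Import all_boot all_order all_algebra.
From mathcomp Require Import all_classical all_reals all_analysis.
Set Implicit Arguments. Unset Strict Implicit. Unset Printing Implicit Defensive.
Import Order.TTheory GRing.Theory Num.Theory.
Local Open Scope classical_set_scope.
Local Open Scope ring_scope.

Section Defs.
Variable R : realType.

(* max absolute row sum (for column vectors: max absolute entry) *)
Definition infnorm (p q : nat) (A : 'M[R]_(p, q)) : R :=
  \big[Num.max/0]_(i < p) \sum_(j < q) `|A i j|.

Definition norm2 (q : nat) (x : 'cV[R]_q) : R :=
  Num.sqrt (\sum_(j < q) (x j 0) ^+ 2).

Definition specnorm (p q : nat) (A : 'M[R]_(p, q)) : R :=
  sup [set norm2 (A *m x) | x in [set x : 'cV[R]_q | norm2 x <= 1]].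

Definition strongly_stable (n m : nat) (A : 'M[R]_n) (B : 'M[R]_(n, m))
  (K : 'M[R]_(m, n)) (kappa gamma : R) : Prop :=
  exists (Q L : 'M[R]_n),
    [/\ Q \in unitmx, A - B *m K = invmx Q *m L *m Q & specnorm L <= 1 - gamma] /\
    [/\ specnorm Q <= kappa, specnorm (invmx Q) <= kappa & specnorm K <= kappa].

Definition kappaB (n m : nat) (B : 'M[R]_(n, m)) : R := Num.max (specnorm B) 1.

Definition wpast (n : nat) (w : nat -> 'cV[R]_n) (t i : nat) : 'cV[R]_n :=
  if (i <= t)%N then w (t - i)%N else 0.

(* disturbance-action control: u_t = -K x_t + sum_{i=1}^H M_t^[i] w_{t-i};
   M t i is M_t^[i] (only 1 <= i <= H is used) *)
Definition dac_input (n m H : nat) (K : 'M[R]_(m, n)) (M : nat -> nat -> 'M[R]_(m, n))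
  (w : nat -> 'cV[R]_n) (t : nat) (xt : 'cV[R]_n) : 'cV[R]_m :=
  - (K *m xt) + \sum_(1 <= i < H.+1) M t i *m wpast w t i.

Fixpoint state (n m H : nat) (A : 'M[R]_n) (B : 'M[R]_(n, m)) (K : 'M[R]_(m, n))
  (M : nat -> nat -> 'M[R]_(m, n)) (w : nat -> 'cV[R]_n) (t : nat) : 'cV[R]_n :=
  match t with
  | 0 => 0
  | t'.+1 => let xt := state H A B K M w t' in
             A *m xt + B *m dac_input H K M w t' xt + w t'
  end.

Definition in_Mset (n m H : nat) (kappa gamma : R) (Mt : nat -> 'M[R]_(m, n)) : Prop :=
  forall i : nat, (1 <= i <= H)%N ->
    infnorm (Mt i) <= 2 * Num.sqrt n%:R * kappa ^+ 3 * (1 - gamma) ^+ (i.-1).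

(* Multivariate polynomials in 6 real variables with real coefficients:
   a finite list of monomials (coefficient, exponent vector). *)
Definition poly6 := seq (R * {ffun 'I_6 -> nat}).
Definition peval6 (p : poly6) (v : 'I_6 -> R) : R :=
  \sum_(mo <- p) mo.1 * \prod_(i < 6) v i ^+ mo.2 i.

End Defs.

(** Write [A_K = Q^-1 L Q] with [|L|_2 <= 1 - gamma] and [z_t = Q x_t]. The
    closed loop reads [x_(t+1) = A_K x_t + d_t], where the forcing
    [d_t = B sum_i M_t^[i] w_(t-i) + w_t] has Euclidean norm [O(H sqrt(n m))]
    because the parameters lie in the set [M].  Hence
    [|z_(t+1)| <= (1 - gamma) |z_t| + kappa |d_t|], so [|z_t|] stays below
    [kappa sup |d| / gamma], and [A_K^H = Q^-1 L^H Q] contracts this by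
    [kappa (1 - gamma)^H].  Passing between the Euclidean norm and the
    infinity norm costs at most a factor [sqrt n <= n]. *)
From HB Require Import structures.
From mathcomp Require Import all_boot all_order all_algebra.
From mathcomp Require Import all_classical all_reals all_analysis.
From mathcomp Require Import ring lra.
Import Order.TTheory GRing.Theory Num.Theory.
Local Open Scope ring_scope.

Set Implicit Arguments.
Unset Strict Implicit.
Unset Printing Implicit Defensive.

Section Norms.
Variable R : realType.

Lemma norm2_ge0 q (x : 'cV[R]_q) : 0 <= norm2 x.
Proof. exact: sqrtr_ge0. Qed.

Lemma sumsq_ge0 q (x : 'cV[R]_q) : 0 <= \sum_(j < q) x j 0 ^+ 2.
Proof. by apply: sumr_ge0 => j _; apply: sqr_ge0. Qed.

Lemma norm2_sqr q (x : 'cV[R]_q) : norm2 x ^+ 2 = \sum_(j < q) x j 0 ^+ 2.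
Proof. by rewrite sqr_sqrtr // sumsq_ge0. Qed.

Lemma norm2_le q (x : 'cV[R]_q) c :
  0 <= c -> \sum_(j < q) x j 0 ^+ 2 <= c ^+ 2 -> norm2 x <= c.
Proof.
by move=> c_ge0 x_le; rewrite -(ger0_norm c_ge0) -sqrtr_sqr ler_sqrt ?sqr_ge0.
Qed.

Lemma norm2_0 q : norm2 (0 : 'cV[R]_q) = 0.
Proof. by rewrite /norm2 big1 ?sqrtr0 // => j _; rewrite mxE expr0n. Qed.

Lemma norm2Z q (x : 'cV[R]_q) a : norm2 (a *: x) = `|a| * norm2 x.
Proof.
rewrite /norm2 -sqrtr_sqr -sqrtrM ?sqr_ge0 // mulr_sumr.
by congr Num.sqrt; apply: eq_bigr => j _; rewrite mxE exprMn.
Qed.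

Lemma ler_entry_norm2 q (x : 'cV[R]_q) j : `|x j 0| <= norm2 x.
Proof.
rewrite -sqrtr_sqr ler_sqrt ?sumsq_ge0 // (bigD1 j) //= lerDl.
by apply: sumr_ge0 => i _; apply: sqr_ge0.
Qed.

Lemma norm2_eq0 q (x : 'cV[R]_q) : norm2 x = 0 -> x = 0.
Proof.
move=> x0; apply/matrixP => i j; rewrite ord1 mxE; apply/eqP.
by rewrite -normr_le0 -x0 ler_entry_norm2.
Qed.

Lemma norm2_gt0 q (x : 'cV[R]_q) : x != 0 -> 0 < norm2 x.
Proof.
by move=> x_neq0; rewrite lt_def norm2_ge0 andbT; apply: contra_neq x_neq0; apply: norm2_eq0.
Qed.

Lemma norm2_le_entry q (x : 'cV[R]_q) c :
  0 <= c -> (forall j, `|x j 0| <= c) -> norm2 x <= Num.sqrt q%:R * c.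
Proof.
move=> c_ge0 x_le; apply: norm2_le; first by rewrite mulr_ge0 ?sqrtr_ge0.
rewrite exprMn sqr_sqrtr // -[in q%:R](card_ord q) mulr_natl -sumr_const.
apply: ler_sum => j _; rewrite -real_normK ?num_real //.
by rewrite lerXn2r ?nnegrE.
Qed.

Lemma dot_le_norm2 q (x y : 'cV[R]_q) :
  \sum_(j < q) x j 0 * y j 0 <= norm2 x * norm2 y.
Proof.
have [->|x_neq0] := eqVneq x 0.
  by rewrite norm2_0 mul0r big1 // => j _; rewrite mxE mul0r.
have [->|y_neq0] := eqVneq y 0.
  by rewrite norm2_0 mulr0 big1 // => j _; rewrite mxE mulr0.
set u := norm2 x; set v := norm2 y.
have uv_gt0 : 0 < u * v by rewrite mulr_gt0 ?norm2_gt0.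
rewrite -(ler_pM2l uv_gt0).
(* Summing [(v x_j - u y_j)^2 >= 0] gives [2 u v <x, y> <= 2 u^2 v^2]. *)
have : \sum_(j < q) 2 * (u * v) * (x j 0 * y j 0)
       <= \sum_(j < q) (v ^+ 2 * x j 0 ^+ 2 + u ^+ 2 * y j 0 ^+ 2).
  by apply: ler_sum => j _; have := sqr_ge0 (v * x j 0 - u * y j 0); lra.
by rewrite -mulr_sumr big_split /= -!mulr_sumr -!norm2_sqr -/u -/v; lra.
Qed.

Lemma norm2D q (x y : 'cV[R]_q) : norm2 (x + y) <= norm2 x + norm2 y.
Proof.
apply: norm2_le; first by rewrite addr_ge0 ?norm2_ge0.
have -> : \sum_(j < q) (x + y) j 0 ^+ 2 =
          norm2 x ^+ 2 + 2 * \sum_(j < q) x j 0 * y j 0 + norm2 y ^+ 2.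
  rewrite !norm2_sqr mulr_sumr -!big_split /=.
  by apply: eq_bigr => j _; rewrite mxE; ring.
by have := dot_le_norm2 x y; rewrite sqrrD; lra.
Qed.

Lemma infnorm_ge0 p q (A : 'M[R]_(p, q)) : 0 <= infnorm A.
Proof.
rewrite /infnorm; elim/big_ind: _ => //; first by move=> a b ? ?; rewrite le_max; apply/orP; left.
by move=> i _; apply: sumr_ge0 => j _; apply: normr_ge0.
Qed.

Lemma ler_row_infnorm p q (A : 'M[R]_(p, q)) i :
  \sum_(j < q) `|A i j| <= infnorm A.
Proof. by rewrite /infnorm (bigD1 i) //= le_max lexx. Qed.

Lemma infnorm_le p q (A : 'M[R]_(p, q)) c :
  0 <= c -> (forall i, \sum_(j < q) `|A i j| <= c) -> infnorm A <= c.
Proof.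
move=> c_ge0 A_le; rewrite /infnorm; elim/big_ind: _ => // a b a_le b_le.
by rewrite ge_max a_le.
Qed.

Lemma ler_entry_infnorm q (x : 'cV[R]_q) i : `|x i 0| <= infnorm x.
Proof. by have := ler_row_infnorm x i; rewrite big_ord1. Qed.

Lemma infnorm_col_le q (x : 'cV[R]_q) c :
  0 <= c -> (forall i, `|x i 0| <= c) -> infnorm x <= c.
Proof. by move=> c_ge0 x_le; apply: infnorm_le => // i; rewrite big_ord1. Qed.

Lemma infnormD_col q (x y : 'cV[R]_q) : infnorm (x + y) <= infnorm x + infnorm y.
Proof.
apply: infnorm_col_le => [|i]; first by rewrite addr_ge0 ?infnorm_ge0.
by rewrite mxE (le_trans (ler_normD _ _)) // lerD ?ler_entry_infnorm.
Qed.

Lemma infnorm_sum_col I (r : seq I) (P : pred I) q (F : I -> 'cV[R]_q) :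
  infnorm (\sum_(i <- r | P i) F i) <= \sum_(i <- r | P i) infnorm (F i).
Proof.
elim/big_ind2: _ => // [|a x b y x_le y_le].
  by apply: infnorm_col_le => // i; rewrite mxE normr0.
exact: le_trans (infnormD_col x y) (lerD x_le y_le).
Qed.

Lemma infnorm_mulmx_le p q (A : 'M[R]_(p, q)) (x : 'cV[R]_q) :
  infnorm (A *m x) <= infnorm A * infnorm x.
Proof.
apply: infnorm_col_le => [|i]; first by rewrite mulr_ge0 ?infnorm_ge0.
rewrite mxE (le_trans (ler_norm_sum _ _ _)) //.
apply: le_trans (ler_wpM2r (infnorm_ge0 x) (ler_row_infnorm A i)).
rewrite mulr_suml; apply: ler_sum => j _.
by rewrite normrM ler_wpM2l ?ler_entry_infnorm.
Qed.

Lemma infnorm_le_norm2 q (x : 'cV[R]_q) : infnorm x <= norm2 x.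
Proof. exact: infnorm_col_le (norm2_ge0 x) (ler_entry_norm2 x). Qed.

Lemma norm2_le_infnorm q (x : 'cV[R]_q) : norm2 x <= Num.sqrt q%:R * infnorm x.
Proof. exact: norm2_le_entry (infnorm_ge0 x) (ler_entry_infnorm x). Qed.

Lemma norm2_mulmx_le p q (A : 'M[R]_(p, q)) (x : 'cV[R]_q) :
  norm2 (A *m x) <= specnorm A * norm2 x.
Proof.
have A_bounded : has_ubound
    [set norm2 (A *m y) | y in [set y : 'cV[R]_q | norm2 y <= 1]].
  exists (Num.sqrt p%:R * infnorm A) => _ [y /= y_le1 <-].
  apply: le_trans (norm2_le_infnorm _) _; rewrite ler_wpM2l ?sqrtr_ge0 //.
  apply: le_trans (infnorm_mulmx_le A y) _; rewrite -[leRHS]mulr1.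
  by rewrite ler_wpM2l ?infnorm_ge0 // (le_trans (infnorm_le_norm2 y)).
have [->|x_neq0] := eqVneq x 0; first by rewrite mulmx0 !norm2_0 mulr0.
have x_gt0 := norm2_gt0 x_neq0.
rewrite -ler_pdivrMr // mulrC -[(norm2 x)^-1]ger0_norm ?invr_ge0 ?norm2_ge0 //.
rewrite -norm2Z scalemxAr; apply: (ub_le_sup A_bounded).
exists ((norm2 x)^-1 *: x) => //=.
by rewrite norm2Z ger0_norm ?invr_ge0 ?norm2_ge0 // mulVf ?gt_eqF.
Qed.

End Norms.

Lemma sqrt_nat_le (R : realType) (n : nat) : Num.sqrt n%:R <= n%:R :> R.
Proof.
case: n => [|n]; first by rewrite sqrtr0.
have n_ge1 : 1 <= n.+1%:R :> R by rewrite ler1n.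
have := sqr_sqrtr (ler0n R n.+1); have := sqrtr_ge0 (n.+1%:R : R).
set s := Num.sqrt _ => s_ge0 s_sqr.
have s_ge1 : 1 <= s by rewrite -sqrtr1 ler_sqrt.
nra.
Qed.

Section ConjugateContraction.
Variables (R : realType) (n : nat) (Q L AK : 'M[R]_n) (rho : R).
Hypotheses (Q_unit : Q \in unitmx) (AK_conj : AK = invmx Q *m L *m Q).
Hypotheses (L_le : specnorm L <= rho) (rho_ge0 : 0 <= rho).

Lemma mulmx_conj (y : 'cV[R]_n) : Q *m (AK *m y) = L *m (Q *m y).
Proof. by rewrite AK_conj !mulmxA mulmxV // mul1mx. Qed.

Lemma norm2_conj_mulmx (y : 'cV[R]_n) : norm2 (Q *m (AK *m y)) <= rho * norm2 (Q *m y).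
Proof.
rewrite mulmx_conj; apply: le_trans (norm2_mulmx_le _ _) _.
by rewrite ler_wpM2r ?norm2_ge0.
Qed.

Lemma norm2_conj_expmx k (y : 'cV[R]_n) :
  norm2 (Q *m (AK ^+ k *m y)) <= rho ^+ k * norm2 (Q *m y).
Proof.
elim: k => [|k IH]; first by rewrite expr0 mul1mx mul1r.
rewrite exprS -mulmxE -mulmxA exprS -mulrA.
exact: le_trans (norm2_conj_mulmx _) (ler_wpM2l rho_ge0 IH).
Qed.

Lemma norm2_conj_trajectory (x d : nat -> 'cV[R]_n) c :
  rho < 1 -> x 0%N = 0 -> (forall t, x t.+1 = AK *m x t + d t) ->
  (forall t, norm2 (Q *m d t) <= c) ->
  forall t, norm2 (Q *m x t) <= c / (1 - rho).
Proof.
move=> rho_lt1 x0 xS d_le; have c_ge0 := le_trans (norm2_ge0 _) (d_le 0%N).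
elim=> [|t IH]; first by rewrite x0 mulmx0 norm2_0 divr_ge0 // subr_ge0 ltW.
have -> : c / (1 - rho) = rho * (c / (1 - rho)) + c.
  by field; rewrite subr_eq0 gt_eqF.
rewrite xS mulmxDr; apply: le_trans (norm2D _ _) (lerD _ (d_le t)).
exact: le_trans (norm2_conj_mulmx _) (ler_wpM2l rho_ge0 IH).
Qed.

End ConjugateContraction.

Definition dac_forcing (R : realType) (n m H : nat) (B : 'M[R]_(n, m))
    (M : nat -> nat -> 'M[R]_(m, n)) (w : nat -> 'cV[R]_n) (t : nat) : 'cV[R]_n :=
  B *m (\sum_(1 <= i < H.+1) M t i *m wpast w t i) + w t.

Lemma state_closed_loop (R : realType) n m H (A : 'M[R]_n) (B : 'M[R]_(n, m))
    K M w t :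
  state H A B K M w t.+1 =
  (A - B *m K) *m state H A B K M w t + dac_forcing H B M w t.
Proof. by rewrite /= /dac_input mulmxDr mulmxN mulmxA mulmxBl !addrA. Qed.

Section DisturbanceAction.
Variables (R : realType) (n m H : nat) (kappa gamma wbar : R).
Variables (B : 'M[R]_(n, m)) (M : nat -> nat -> 'M[R]_(m, n)) (w : nat -> 'cV[R]_n).
Hypotheses (kappa_ge1 : 1 <= kappa) (gamma01 : 0 <= gamma <= 1).
Hypotheses (M_in : forall k, in_Mset H kappa gamma (M k)).
Hypotheses (w_le : forall k, infnorm (w k) <= wbar).

Let wbar_ge0 : 0 <= wbar := le_trans (infnorm_ge0 _) (w_le 0%N).
Let kappa_ge0 : 0 <= kappa := le_trans ler01 kappa_ge1.

Lemma infnorm_wpast t i : infnorm (wpast w t i) <= wbar.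
Proof.
rewrite /wpast; case: ifP => // _.
by apply: infnorm_col_le => // j; rewrite mxE normr0.
Qed.

Lemma infnorm_dac_sum t :
  infnorm (\sum_(1 <= i < H.+1) M t i *m wpast w t i)
  <= H%:R * (2 * Num.sqrt n%:R * kappa ^+ 3 * wbar).
Proof.
set c := 2 * _ * _ * _.
have -> : H%:R * c = \sum_(1 <= i < H.+1) c by rewrite sumr_const_nat subn1 mulr_natl.
apply: le_trans (infnorm_sum_col _ _ _) _.
rewrite big_nat_cond [leRHS]big_nat_cond; apply: ler_sum => i /andP[i_range _].
apply: le_trans (infnorm_mulmx_le _ _) _.
apply: le_trans (ler_wpM2l (infnorm_ge0 _) (infnorm_wpast t i)) _.
rewrite ler_wpM2r //; apply: le_trans (M_in t i_range) _.
have [gamma_ge0 gamma_le1] := andP gamma01.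
by rewrite -[leRHS]mulr1 ler_wpM2l ?exprn_ile1 ?mulr_ge0 ?sqrtr_ge0 ?exprn_ge0
  ?subr_ge0 ?gerBl.
Qed.

Lemma norm2_dac_forcing t : (0 < m)%N -> (0 < H)%N ->
  norm2 (dac_forcing H B M w t)
  <= 3 * H%:R * Num.sqrt n%:R * Num.sqrt m%:R * kappaB B * kappa ^+ 3 * wbar.
Proof.
move=> m_gt0 H_gt0.
have kB_ge1 : 1 <= kappaB B by rewrite le_max lexx orbT.
have sqrt_m_ge1 : 1 <= Num.sqrt m%:R :> R by rewrite -[leLHS]sqrtr1 ler_sqrt ?ler0n // ler1n.
have H_ge1 : 1 <= H%:R :> R by rewrite ler1n.
have kappa3_ge1 : 1 <= kappa ^+ 3 by apply: exprn_ege1.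
have Bsum_le : norm2 (B *m \sum_(1 <= i < H.+1) M t i *m wpast w t i)
    <= kappaB B * (Num.sqrt m%:R * (H%:R * (2 * Num.sqrt n%:R * kappa ^+ 3 * wbar))).
  apply: le_trans (norm2_mulmx_le _ _) _.
  apply: le_trans (ler_wpM2r (norm2_ge0 _) (_ : specnorm B <= kappaB B)) _.
    by rewrite le_max lexx.
  rewrite ler_wpM2l ?(le_trans ler01 kB_ge1) //.
  apply: le_trans (norm2_le_infnorm _) _.
  by rewrite ler_wpM2l ?sqrtr_ge0 ?infnorm_dac_sum.
have w_le2 : norm2 (w t) <= Num.sqrt n%:R * wbar.
  exact: le_trans (norm2_le_infnorm _) (ler_wpM2l (sqrtr_ge0 _) (w_le t)).
apply: le_trans (norm2D _ _) _; apply: le_trans (lerD Bsum_le w_le2) _.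
set X := H%:R * Num.sqrt m%:R * kappaB B * kappa ^+ 3.
have X_ge1 : 1 <= X by rewrite !mulr_ege1.
have s_ge0 : 0 <= Num.sqrt n%:R * wbar by rewrite mulr_ge0 ?sqrtr_ge0.
have -> : kappaB B * (Num.sqrt m%:R * (H%:R * (2 * Num.sqrt n%:R * kappa ^+ 3 * wbar)))
          + Num.sqrt n%:R * wbar = (2 * X + 1) * (Num.sqrt n%:R * wbar) by rewrite /X; ring.
have -> : 3 * H%:R * Num.sqrt n%:R * Num.sqrt m%:R * kappaB B * kappa ^+ 3 * wbar
          = 3 * X * (Num.sqrt n%:R * wbar) by rewrite /X; ring.
by rewrite ler_wpM2r //; lra.
Qed.

End DisturbanceAction.

Lemma norm2_expmx_state (R : realType) (gamma kappa wbar : R) (n m H k t : nat)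
    (A : 'M[R]_n) (B : 'M[R]_(n, m)) (K : 'M[R]_(m, n))
    (M : nat -> nat -> 'M[R]_(m, n)) (w : nat -> 'cV[R]_n) :
  0 < gamma <= 1 -> 1 <= kappa -> (0 < m)%N -> (0 < H)%N ->
  strongly_stable A B K kappa gamma ->
  (forall k, in_Mset H kappa gamma (M k)) -> (forall k, infnorm (w k) <= wbar) ->
  norm2 ((A - B *m K) ^+ k *m state H A B K M w t)
  <= kappa ^+ 5 * Num.sqrt n%:R *
     (3 * H%:R * Num.sqrt m%:R * kappaB B * gamma^-1 * wbar * (1 - gamma) ^+ k).
Proof.
move=> /andP[gamma_gt0 gamma_le1] kappa_ge1 m_gt0 H_gt0.
case=> Q [L [[Q_unit AK_conj L_le] [Q_le Qinv_le _]]] M_in w_le.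
have kappa_ge0 : 0 <= kappa := le_trans ler01 kappa_ge1.
have rho_ge0 : 0 <= 1 - gamma by rewrite subr_ge0.
set c := 3 * H%:R * Num.sqrt n%:R * Num.sqrt m%:R * kappaB B * kappa ^+ 3 * wbar.
have forcing_le s : norm2 (Q *m dac_forcing H B M w s) <= kappa * c.
  apply: le_trans (norm2_mulmx_le _ _) _.
  apply: le_trans (ler_wpM2r (norm2_ge0 _) Q_le) _.
  rewrite ler_wpM2l //; apply: (norm2_dac_forcing B kappa_ge1 _ M_in w_le) => //.
  by rewrite ltW.
have Qx_le : norm2 (Q *m state H A B K M w t) <= kappa * c / (1 - (1 - gamma)).
  apply: (norm2_conj_trajectory Q_unit AK_conj L_le rho_ge0) => //; first by lra.
  exact: state_closed_loop.
rewrite -(mulKmx Q_unit (_ ^+ k *m _)).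
apply: le_trans (norm2_mulmx_le _ _) _.
apply: le_trans (ler_wpM2r (norm2_ge0 _) Qinv_le) _.
apply: le_trans (ler_wpM2l kappa_ge0 (norm2_conj_expmx Q_unit AK_conj L_le rho_ge0 k _)) _.
apply: le_trans (ler_wpM2l kappa_ge0 (ler_wpM2l (exprn_ge0 k rho_ge0) Qx_le)) _.
rewrite [leRHS](_ : _ = kappa * ((1 - gamma) ^+ k * (kappa * c / (1 - (1 - gamma))))) //.
by rewrite /c; field; rewrite subKr gt_eqF.
Qed.

(* The horizon condition is only needed to exclude [H = 0]. *)
Lemma horizon_gt0 (R : realType) (gamma kappa : R) (H : nat) :
  0 < gamma < 1 -> 1 <= kappa ->
  ln (2 * kappa ^+ 2) / ln ((1 - gamma)^-1) <= H%:R -> (0 < H)%N.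
Proof.
move=> /andP[gamma_gt0 gamma_lt1] kappa_ge1; rewrite lt0n.
apply: contraTneq => ->; rewrite -ltNge divr_gt0 ?ln_gt0 //; first by nra.
by rewrite invf_gt1 ?subr_gt0 // gtrBl.
Qed.

Definition monomial6 (e : seq nat) : {ffun 'I_6 -> nat} := [ffun i : 'I_6 => nth 0%N e i].

Definition c1_poly (R : realType) : poly6 R :=
  [:: (3%:R, monomial6 [:: 1; 0; 6; 1; 1; 1]%N);
      (3%:R, monomial6 [:: 0; 1; 6; 1; 1; 1]%N);
      (3%:R, monomial6 [:: 0; 0; 6; 1; 1; 1]%N)].

Lemma peval6_c1_poly (R : realType) (a b k kB g wb : R) :
  peval6 (c1_poly R) [ffun i : 'I_6 => [:: a; b; k; kB; g; wb]`_i] =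
  3 * (a + b + 1) * k ^+ 6 * kB * g * wb.
Proof.
rewrite /peval6 /c1_poly !big_cons big_nil /= !big_ord_recl !big_ord0 /=.
by rewrite !ffunE /= !expr0 !expr1; ring.
Qed.

Theorem lemma1 (R : realType) :
  exists P : poly6 R,
  forall (gamma kappa wbar : R) (n m kx ku H : nat)
    (A : 'M[R]_n) (B : 'M[R]_(n, m)) (KK : 'M[R]_(m, n))
    (Dx : 'M[R]_(kx, n)) (Du : 'M[R]_(ku, m))
    (M : nat -> nat -> 'M[R]_(m, n)),
  0 < gamma < 1 -> 1 <= kappa -> 0 < wbar ->
  (0 < n)%N -> (0 < m)%N ->
  strongly_stable A B KK kappa gamma ->
  let c1 := peval6 P [ffun i : 'I_6 =>
              [:: infnorm Dx; infnorm Du; kappa; kappaB B; gamma^-1; wbar]`_i] in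
  let eps1 := c1 * n%:R * Num.sqrt m%:R * H%:R * (1 - gamma) ^+ H in
  0 < c1 /\
  ((forall k, in_Mset H kappa gamma (M k)) ->
   ln (2 * kappa ^+ 2) / ln ((1 - gamma)^-1) <= H%:R ->
   forall (t : nat) (w : nat -> 'cV[R]_n),
   (forall k, infnorm (w k) <= wbar) ->
   let AK := A - B *m KK in
   let x := state H A B KK M w (t - H)%N in
   infnorm (Dx *m (AK ^+ H *m x)) <= eps1 /\
   infnorm (Du *m (KK *m (AK ^+ H *m x))) <= eps1).
Proof.
exists (c1_poly R).
move=> gamma kappa wbar n m kx ku H A B KK Dx Du M gamma01 kappa_ge1 wbar_gt0
  n_gt0 m_gt0 stable c1 eps1.
set a := infnorm Dx; set b := infnorm Du.
have a_ge0 : 0 <= a := infnorm_ge0 Dx.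
have b_ge0 : 0 <= b := infnorm_ge0 Du.
have [gamma_gt0 gamma_lt1] := andP gamma01.
have kB_ge1 : 1 <= kappaB B by rewrite le_max lexx orbT.
have kappa_ge0 : 0 <= kappa := le_trans ler01 kappa_ge1.
have c1E : c1 = 3 * (a + b + 1) * kappa ^+ 6 * kappaB B * gamma^-1 * wbar.
  exact: peval6_c1_poly.
split.
  rewrite c1E; repeat apply: mulr_gt0; rewrite ?exprn_gt0 ?invr_gt0 //; lra.
move=> M_in H_le t w w_le AK x.
have H_gt0 := horizon_gt0 gamma01 kappa_ge1 H_le.
have [_ [_ [_ [_ _ K_le]]]] := stable.
set G := 3 * H%:R * Num.sqrt m%:R * kappaB B * gamma^-1 * wbar * (1 - gamma) ^+ H.
have G_ge0 : 0 <= G.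
  by rewrite !mulr_ge0 ?sqrtr_ge0 ?invr_ge0 ?exprn_ge0 ?subr_ge0 //; lra.
set p := kappa ^+ 5 * n%:R * G.
have p_ge0 : 0 <= p by apply: mulr_ge0 => //; rewrite mulr_ge0 ?exprn_ge0 ?ler0n.
have p_le : p <= kappa * p by rewrite ler_peMl.
have eps1E : eps1 = (a + b + 1) * (kappa * p) by rewrite /eps1 c1E /p /G; ring.
set y := AK ^+ H *m x.
have y_le : norm2 y <= p.
  apply: le_trans (norm2_expmx_state H (t - H) _ kappa_ge1 m_gt0 H_gt0 stable M_in w_le) _.
    by rewrite gamma_gt0 ltW.
  by rewrite ler_wpM2r // ler_wpM2l ?exprn_ge0 ?sqrt_nat_le //; lra.
have Ky_le : infnorm (KK *m y) <= kappa * p.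
  apply: le_trans (infnorm_le_norm2 _) (le_trans (norm2_mulmx_le _ _) _).
  apply: le_trans (ler_wpM2r (norm2_ge0 _) K_le) _.
  by rewrite ler_wpM2l //; lra.
split.
  apply: le_trans (infnorm_mulmx_le _ _) _.
  apply: le_trans (ler_wpM2l a_ge0 (le_trans (infnorm_le_norm2 y) y_le)) _.
  rewrite eps1E; nra.
apply: le_trans (infnorm_mulmx_le _ _) (le_trans (ler_wpM2l b_ge0 Ky_le) _).
rewrite eps1E; nra.
Qed.
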